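(* Let $\mathrm{Q}(E)\subset\mathrm{QPH}_0(E)$ be the locus where $\Phi=0$, let $\mathrm{R}(E)$ be the locus where $\Phi\ne 0$ and $L(\Phi)=E_1$ (defined when $m_1>m_2$), and for an integer $j$ let $\mathrm{S}_j(E)$ be the locus where $\Phi\neq0$, $\det\Phi=0$ and $L(\Phi)\ne E_1$ has degree $j$. Then, for every integer $m$, $$\mathrm{QPH}_0(E)=\begin{cases}\mathrm{Q}(E)\sqcup\mathrm{S}_m(E)\sqcup\mathrm{S}_{m-1}(E) & E\cong\mathcal O(m)\oplus\mathcal O(m),\\ \mathrm{Q}(E)\sqcup\mathrm{R}(E)\sqcup\mathrm{S}_m(E) & E\cong\mathcal O(m+1)\oplus\mathcal O(m),\\ \mathrm{Q}(E)\sqcup\mathrm{R}(E)\sqcup\mathrm{S}_{m-1}(E) & E\cong\mathcal O(m+1)\oplus\mathcal O(m-1),\end{cases}$$ and $\mathrm{QPH}_0(E)=\mathrm{Q}(E)\sqcup\mathrm{R}(E)$ if $m_1-m_2\ge 3$.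
   Context: Fix $z_1\in\mathbb{CP}^1\setminus\{0,1,\infty\}$, set $z_2=0$, $z_3=1$, $z_4=\infty$ and $D=z_1+z_2+z_3+z_4$. Let $E\to\mathbb{CP}^1$ be a holomorphic vector bundle of rank 2, $E\cong\mathcal O(m_1)\oplus\mathcal O(m_2)$, $m_1\ge m_2$; when $m_1>m_2$, $E_1\subset E$ is the unique subbundle isomorphic to $\mathcal O(m_1)$. A quasi-parabolic structure on $E$ is a tuple $(F_1,\dots,F_4)$ of lines $F_i\subset E|_{z_i}$. A (strongly) parabolic Higgs field compatible with it is $\Phi\in H^0(\mathbb{CP}^1,\mathrm{End}(E)\otimes K_{\mathbb{CP}^1}(D))$ such that each residue $\mathrm{Res}_{z_i}\Phi$ is nilpotent with $F_i\subset\ker\mathrm{Res}_{z_i}\Phi$. $\mathrm{QPH}(E)$ is the space of all such tuples, and $\mathrm{QPH}_0(E)$ is the subset where $\det\Phi=0$ in $H^0(\mathbb{CP}^1,K^2_{\mathbb{CP}^1}(D))$. A nonzero nilpotent $\Phi$ preserves a unique line subbundle $L(\Phi)\subset E$ (the saturation of $\ker\Phi$). *)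

From HB Require Import structures.
From mathcomp Require Import all_boot all_order all_algebra.
From mathcomp Require Import reals complex mpoly.
Set Implicit Arguments. Unset Strict Implicit. Unset Printing Implicit Defensive.
Import Order.TTheory GRing.Theory Num.Theory.
Local Open Scope ring_scope.

(* CP^1 has homogeneous coordinates (X_0 : X_1), affine coordinate z = X_0/X_1.
   Sections of O(k) over CP^1 = homogeneous polynomials of degree k in
   C[X_0,X_1] (zero if k < 0).  E = O(m1) (+) O(m2), a section of E is a
   column (s_1, s_2) with s_i in H^0(O(m_i)). *)

Section Model.
Variable R : realType.
Local Notation C := (R[i])%C.
Local Notation P := {mpoly C[2]}.

Definition sectO (k : int) (p : P) : Prop :=
  if (0 <= k)%R then p \is (`|k|%N).-homog else p == 0.

(* Fixed homogeneous representatives of the marked points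
   z_1 = (z1:1), z_2 = 0 = (0:1), z_3 = 1 = (1:1), z_4 = oo = (1:0).
   The fibre E|_{z_i} is identified with C^2 by evaluating the two
   components of a section at this representative. *)
Definition marked_pt (z1 : C) (i : 'I_4) : 'I_2 -> C :=
  fun k => match val i with
           | 0%N => if val k == 0%N then z1 else 1
           | 1%N => if val k == 0%N then 0 else 1
           | 2%N => 1
           | _ => if val k == 0%N then 1 else 0
           end.

(* K_{CP^1}(D) = O(2) since deg D = 4, so
   End(E) (x) K(D) = (+)_{a,b} O(m_a - m_b + 2).  A Higgs field is a 2x2 matrix
   of polynomials whose (a,b) entry is a section of O(m_a - m_b + 2). *)
Definition mdeg2 (m1 m2 : int) (a : 'I_2) : int := if val a == 0%N then m1 else m2.

Definition higgs_section (m1 m2 : int) (Phi : 'M[P]_2) : Prop :=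
  forall a b : 'I_2, sectO (mdeg2 m1 m2 a - mdeg2 m1 m2 b + 2) (Phi a b).

(* Residue of Phi at z_i, in the above trivialisation of E|_{z_i}, up to a
   nonzero scalar factor (coming from the trivialisation of K(D)|_{z_i};
   nilpotency and kernels are insensitive to it). *)
Definition residue (z1 : C) (Phi : 'M[P]_2) (i : 'I_4) : 'M[C]_2 :=
  map_mx (meval (marked_pt z1 i)) Phi.

Definition nilpotent_mx (M : 'M[C]_2) : Prop := exists n : nat, M ^+ n = 0.

(* QPH(E): a line F_i in E|_{z_i} is given by a spanning nonzero vector f i. *)
Definition QPH (m1 m2 : int) (z1 : C) (f : 'I_4 -> 'cV[C]_2) (Phi : 'M[P]_2) : Prop :=
  (forall i, f i != 0) /\ higgs_section m1 m2 Phi /\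
  forall i, nilpotent_mx (residue z1 Phi i) /\ residue z1 Phi i *m f i = 0.

Definition QPH0 m1 m2 z1 f Phi : Prop := QPH m1 m2 z1 f Phi /\ \det Phi = 0.

(* A line subbundle of E of degree j: the image of O(j) -> E given by
   (a, b) with a in H^0(O(m1 - j)), b in H^0(O(m2 - j)) without common zero
   on CP^1. *)
Definition line_subbundle (m1 m2 j : int) (a b : P) : Prop :=
  sectO (m1 - j) a /\ sectO (m2 - j) b /\
  forall v : 'I_2 -> C, (exists k, v k != 0) ->
    ~ (a.@[v] = 0 /\ b.@[v] = 0).

Definition col2 (a b : P) : 'cV[P]_2 :=
  \col_(k < 2) (if val k == 0%N then a else b).

(* L(Phi) = saturation of ker Phi is the line subbundle given by (a,b) of degree j:
   (a,b) spans a saturated line subbundle killed by Phi (such a subbundle is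
   unique for Phi <> 0 with det Phi = 0). *)
Definition L_is (m1 m2 : int) (Phi : 'M[P]_2) (j : int) (a b : P) : Prop :=
  line_subbundle m1 m2 j a b /\ Phi *m col2 a b = 0.

(* E_1 = O(m1) (+) 0 (when m1 > m2): the subbundle (a,b) equals E_1 iff b = 0. *)

Definition Qlocus m1 m2 z1 f (Phi : 'M[P]_2) : Prop :=
  QPH0 m1 m2 z1 f Phi /\ Phi = 0.

Definition Rlocus m1 m2 z1 f (Phi : 'M[P]_2) : Prop :=
  QPH0 m1 m2 z1 f Phi /\ Phi != 0 /\ exists j a b, L_is m1 m2 Phi j a b /\ b = 0.

Definition Slocus m1 m2 z1 (j : int) f (Phi : 'M[P]_2) : Prop :=
  QPH0 m1 m2 z1 f Phi /\ Phi != 0 /\ \det Phi = 0 /\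
  exists a b, L_is m1 m2 Phi j a b /\ ((m2 < m1)%R -> b != 0).

End Model.

Definition disj_union3 {T U : Type} (X A B D : T -> U -> Prop) : Prop :=
  forall t u, (X t u <-> A t u \/ B t u \/ D t u) /\
    ~ (A t u /\ B t u) /\ ~ (A t u /\ D t u) /\ ~ (B t u /\ D t u).

Definition disj_union2 {T U : Type} (X A B : T -> U -> Prop) : Prop :=
  forall t u, (X t u <-> A t u \/ B t u) /\ ~ (A t u /\ B t u).

From HB Require Import structures.
From mathcomp Require Import all_boot all_order all_algebra.
From mathcomp Require Import reals complex mpoly.
From mathcomp Require Import boolp ring zify.
Import Order.TTheory GRing.Theory Num.Theory.
Local Open Scope ring_scope.
Set Implicit Arguments. Unset Strict Implicit. Unset Printing Implicit Defensive.

(* Write Phi = [[p, q], [r, s]], so that p, s are binary forms of degree 2,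
   q has degree m1 - m2 + 2 and r has degree m2 - m1 + 2 (zero if negative).
   1. The residues are nilpotent, so tr Phi = p + s vanishes at the three
      points 0, 1, oo; being a quadratic form it vanishes: s = -p.  Together
      with det Phi = 0 this gives the key relation p^2 + q r = 0.
   2. If r = 0 then p = 0 and Phi kills (1, 0), i.e. L(Phi) = E_1 (the locus
      R, or S_m in the balanced case).  This is always so when m1 - m2 >= 3.
   3. If r <> 0, factor out the common zeros of p and r (every binary form of
      degree <= 2 over C splits, and p vanishes wherever r does): writing
      p = L a, r = L b with a, b coprime, Phi kills (a, b), and (a, b) is the
      line subbundle L(Phi), of degree m2 - deg b.
   4. The loci are disjoint because kernels of a nonzero 2x2 matrix of
      polynomials are proportional, and the degree/direction of L(Phi) then
      distinguishes R from S_j and S_m from S_(m-1). *)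

Lemma big_ord2 (T : Type) (idx : T) (op : Monoid.law idx) (F : 'I_2 -> T) :
  \big[op/idx]_(i < 2) F i = op (F ord0) (F ord_max).
Proof.
rewrite big_ord_recr big_ord_recl big_ord0 Monoid.mulm1 /=.
by congr (op (F _) _); apply: val_inj.
Qed.

Lemma ord2P (k : 'I_2) : k = ord0 \/ k = ord_max.
Proof. by case: k => [[|[|]]] // lk; [left|right]; apply: val_inj. Qed.

(* A ring identity that is zero modulo a vanishing quantity w; this is how
   the polynomial identities below are discharged by [ring] and [field]. *)
Lemma eq_mod0 (F : comPzRingType) (u v w k : F) : w = 0 -> u - v = k * w -> u = v.
Proof. by move=> -> e; apply/eqP; rewrite -subr_eq0 e mulr0. Qed.

Section TwoByTwo.
Variable Q : comNzRingType.
Implicit Types M : 'M[Q]_2.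

Lemma det_mx2 M :
  \det M = M ord0 ord0 * M ord_max ord_max - M ord0 ord_max * M ord_max ord0.
Proof.
rewrite (expand_det_row _ ord0) big_ord2 /cofactor !det_mx11 !mxE /=.
have -> : lift ord0 0 = ord_max :> 'I_2 by apply: val_inj.
have -> : lift ord_max 0 = ord0 :> 'I_2 by apply: val_inj.
rewrite add0n expr0 expr1; ring.
Qed.

Lemma mxtrace2 M : \tr M = M ord0 ord0 + M ord_max ord_max.
Proof. by rewrite /mxtrace big_ord2. Qed.

Lemma mulmx2E m n (A : 'M[Q]_(m, 2)) (B : 'M[Q]_(2, n)) i j :
  (A *m B) i j = A i ord0 * B ord0 j + A i ord_max * B ord_max j.
Proof. by rewrite mxE big_ord2. Qed.

Lemma cayley_hamilton2 M : M ^+ 2 = \tr M *: M - \det M *: 1.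
Proof.
apply/matrixP => i j; rewrite expr2 -mulmxE mulmx2E !mxE mxtrace2 det_mx2.
by case: (ord2P i) => ->; case: (ord2P j) => -> /=; ring.
Qed.

End TwoByTwo.

(* A nilpotent 2x2 matrix over a field has zero trace: its determinant
   vanishes, so by Cayley-Hamilton M ^+ k.+1 = (tr M) ^+ k *: M. *)
Lemma nilpotent_mx2_trace (F : fieldType) (M : 'M[F]_2) :
  (exists n, M ^+ n = 0) -> \tr M = 0.
Proof.
case=> -[|k] nilM; first by move/eqP: nilM; rewrite expr0 oner_eq0.
have det0 : \det M = 0.
  have detX i : \det (M ^+ i) = \det M ^+ i.
    elim: i => [|i IH]; first by rewrite !expr0 det1.
    by rewrite !exprS -mulmxE det_mulmx IH.
  by apply/eqP; have := detX k.+1; rewrite nilM det0 => /esym/eqP; rewrite expf_eq0.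
have powM i : M ^+ i.+1 = \tr M ^+ i *: M.
  elim: i => [|i IH]; first by rewrite expr1 expr0 scale1r.
  by rewrite exprSr IH -scalerAl -expr2 cayley_hamilton2 det0 scale0r subr0 scalerA -exprSr.
move: nilM; rewrite powM => /eqP; rewrite scaler_eq0 expf_eq0.
by case/orP=> [/andP[_ /eqP //]|/eqP->]; rewrite mxtrace0.
Qed.

Section BinaryForms.
Variable R : realType.
Local Notation C := (R[i])%C.
Local Notation P := {mpoly C[2]}.
Local Notation X0 := ('X_ord0 : P).
Local Notation X1 := ('X_ord_max : P).

Definition mon (i j : nat) : 'X_{1..2} := (U_(ord0) *+ i + U_(ord_max) *+ j)%MM.

Lemma monE i j k : mon i j k = if val k == 0%N then i else j.
Proof.
rewrite /mon mnmDE !mulmnE !mnm1E.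
by case: k => [[|[|]]] //= _; rewrite ?muln0 ?mul1n ?mul0n ?addn0.
Qed.

Lemma Xmon i j : X0 ^+ i * X1 ^+ j = 'X_[mon i j].
Proof. by rewrite /mon mpolyXD !mpolyXn. Qed.

Lemma mdeg2E (m : 'X_{1..2}) : mdeg m = (m ord0 + m ord_max)%N.
Proof. by rewrite mdegE big_ord2. Qed.

Lemma dhomog2_expand d (p : P) : p \is d.-homog ->
  p = \sum_(i < d.+1) (p@_(mon i (d - i)))%:MP * (X0 ^+ i * X1 ^+ (d - i)).
Proof.
move=> hp; apply/mpolyP => m; rewrite raddf_sum /=.
under eq_bigr => i _ do rewrite mcoeffCM Xmon mcoeffX.
have [hd|hd] := eqVneq (mdeg m) d.
- have lt : (m ord0 < d.+1)%N by rewrite -hd mdeg2E ltnS leq_addr.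
  have em : m = mon (m ord0) (d - m ord0).
    apply/mnmP => k; rewrite monE; case: k => [[|[|]]] //= lk.
    + by congr (m _); apply: val_inj.
    + by rewrite -hd mdeg2E addKn; congr (m _); apply: val_inj.
  rewrite (bigD1 (Ordinal lt)) //= -em eqxx mulr1 big1 ?addr0 // => i ne.
  case: eqP => [e|]; last by rewrite mulr0.
  by move: ne; rewrite -(inj_eq val_inj) /= -e monE eqxx.
- rewrite (dhomog_nemf_coeff hp hd) big1 // => i _.
  case: eqP => [e|]; last by rewrite mulr0.
  by move: hd; rewrite -e mdeg2E !monE /= subnKC ?eqxx // -ltnS.
Qed.

Lemma dhomog0E (p : P) : p \is 0.-homog -> p = (p@_(mon 0 0))%:MP.
Proof.
move=> /dhomog2_expand {1}->.
by rewrite big_ord_recr big_ord0 /= subn0 add0r !expr0 !mulr1.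
Qed.

Lemma dhomog1E (p : P) : p \is 1.-homog -> exists a b : C, p = a%:MP * X0 + b%:MP * X1.
Proof.
move=> /dhomog2_expand ->; rewrite !big_ord_recr big_ord0 /= subn0 subnn add0r.
by do 2 eexists; rewrite !expr0 !expr1 mulr1 mul1r addrC.
Qed.

Lemma dhomog2E (p : P) : p \is 2.-homog ->
  exists a b c : C, p = a%:MP * (X0 * X0) + b%:MP * (X0 * X1) + c%:MP * (X1 * X1).
Proof.
move=> /dhomog2_expand ->; rewrite !big_ord_recr big_ord0 /= subnn subn0.
exists p@_(mon 2 0), p@_(mon 1 1), p@_(mon 0 2).
by rewrite (_ : (2 - 1 = 1)%N) //; ring.
Qed.

Lemma dhomogC (c : C) : (c%:MP : P) \is 0.-homog.
Proof. by rewrite dhomogE msuppC; case: eqP => /=; rewrite ?mdeg0. Qed.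

Lemma dhomog_lin (a b : C) : a%:MP * X0 + b%:MP * X1 \is 1.-homog.
Proof.
have homX (k : 'I_2) : ('X_k : P) \is 1.-homog by rewrite dhomogX; apply/eqP; apply: mdeg1.
by apply: dhomogD; apply: (dhomogM (dhomogC _) (homX _)).
Qed.

(* Points of CP^1 are given by nonzero vectors x of C^2. *)
Definition nonzero_pt (x : 'I_2 -> C) := exists k, x k != 0.
Definition pt2 (u w : C) : 'I_2 -> C := fun k => if val k == 0%N then u else w.

Lemma nonzero_ptE x : nonzero_pt x -> x ord0 != 0 \/ x ord_max != 0.
Proof. by case=> k; case: (ord2P k) => ->; [left|right]. Qed.

Lemma nonzero_pt2 u w : u != 0 \/ w != 0 -> nonzero_pt (pt2 u w).
Proof. by case=> h; [exists ord0 | exists ord_max]. Qed.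

Lemma mevalX0 x : X0.@[x] = x ord0. Proof. exact: mevalXU. Qed.
Lemma mevalX1 x : X1.@[x] = x ord_max. Proof. exact: mevalXU. Qed.

Ltac meval_simpl :=
  rewrite ?(mevalD, mevalB, mevalN, mevalM, mevalC, mevalX0, mevalX1, meval0, meval1).

Definition linform (x : 'I_2 -> C) : P := (x ord_max)%:MP * X0 - (x ord0)%:MP * X1.

Lemma linear_form_factor (f : P) x : f \is 1.-homog -> nonzero_pt x -> f.@[x] = 0 ->
  exists c : C, f = c%:MP * linform x.
Proof.
move=> /dhomog1E [a [b ->]] /nonzero_ptE hx; meval_simpl => e.
have E c : c%:MP * linform x = (c * x ord_max)%:MP * X0 + (- (c * x ord0))%:MP * X1.
  by rewrite /linform !rmorphN !rmorphM /=; ring.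
have [h1|h1] := eqVneq (x ord_max) 0.
- have h0 : x ord0 != 0 by case: hx => //; rewrite h1 eqxx.
  exists (- b / x ord0); rewrite E; congr (_%:MP * _ + _%:MP * _); last by field.
  move/eqP: e; rewrite h1 mulr0 addr0 mulf_eq0 (negbTE h0) orbF => /eqP ->.
  by rewrite mulr0.
- exists (a / x ord_max); rewrite E; congr (_%:MP * _ + _%:MP * _); first by field.
  by apply: (eq_mod0 (k := (x ord_max)^-1) e); field.
Qed.

Lemma quadratic_form_factor (f : P) x : f \is 2.-homog -> nonzero_pt x -> f.@[x] = 0 ->
  exists g : P, g \is 1.-homog /\ f = linform x * g.
Proof.
move=> /dhomog2E [a [b [c ->]]] /nonzero_ptE hx; meval_simpl => e.
have E g0 g1 : linform x * (g0%:MP * X0 + g1%:MP * X1) =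
   (x ord_max * g0)%:MP * (X0 * X0) + (x ord_max * g1 - x ord0 * g0)%:MP * (X0 * X1)
   + (- (x ord0 * g1))%:MP * (X1 * X1).
  by rewrite /linform !rmorphN !rmorphB !rmorphM /=; ring.
have [h1|h1] := eqVneq (x ord_max) 0.
- have h0 : x ord0 != 0 by case: hx => //; rewrite h1 eqxx.
  exists ((- b / x ord0)%:MP * X0 + (- c / x ord0)%:MP * X1).
  split; first exact: dhomog_lin.
  rewrite E h1; congr (_%:MP * _ + _%:MP * _ + _%:MP * _); try by field.
  move/eqP: e; rewrite h1 !mulr0 !addr0 !mulf_eq0 (negbTE h0) !orbF => /eqP ->.
  by rewrite mul0r.
- exists ((a / x ord_max)%:MP * X0 + ((b + x ord0 * (a / x ord_max)) / x ord_max)%:MP * X1).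
  split; first exact: dhomog_lin.
  rewrite E; congr (_%:MP * _ + _%:MP * _ + _%:MP * _); try by field.
  by apply: (eq_mod0 (k := (x ord_max ^+ 2)^-1) e); field.
Qed.

Lemma linear_form_root (f : P) : f \is 1.-homog -> exists x, nonzero_pt x /\ f.@[x] = 0.
Proof.
move=> /dhomog1E [a [b ->]].
have [ea|na] := eqVneq a 0.
- exists (pt2 1 0); split; first by apply: nonzero_pt2; left; rewrite oner_eq0.
  by meval_simpl; rewrite /pt2 /= ea; ring.
- exists (pt2 (- b) a); split; first by apply: nonzero_pt2; right.
  by meval_simpl; rewrite /pt2 /=; ring.
Qed.

Lemma quadratic_form_root (f : P) : f \is 2.-homog -> exists x, nonzero_pt x /\ f.@[x] = 0.
Proof.
move=> /dhomog2E [a [b [c ->]]].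
have [ea|na] := eqVneq a 0.
- exists (pt2 1 0); split; first by apply: nonzero_pt2; left; rewrite oner_eq0.
  by meval_simpl; rewrite /pt2 /= ea; ring.
- set s := sqrtC (b ^+ 2 - 4 * a * c).
  have hs : s ^+ 2 - (b ^+ 2 - 4 * a * c) = 0 by rewrite /s sqrtCK subrr.
  exists (pt2 ((- b + s) / (2 * a)) 1).
  split; first by apply: nonzero_pt2; right; rewrite oner_eq0.
  have h2 : (2 : C) != 0 by rewrite pnatr_eq0.
  meval_simpl; rewrite /pt2 /=.
  by apply: (eq_mod0 (k := (4 * a)^-1) hs); field.
Qed.

Lemma quadratic_form_vanish3 (f : P) : f \is 2.-homog ->
  f.@[pt2 0 1] = 0 -> f.@[pt2 1 1] = 0 -> f.@[pt2 1 0] = 0 -> f = 0.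
Proof.
move=> /dhomog2E [a [b [c ->]]]; meval_simpl; rewrite /pt2 /= => e0 e1 eoo.
have ec : c = 0 by apply: (eq_mod0 (k := 1) e0); ring.
have ea : a = 0 by apply: (eq_mod0 (k := 1) eoo); ring.
have eb : b = 0 by rewrite ea ec in e1; apply: (eq_mod0 (k := 1) e1); ring.
by rewrite ea eb ec !rmorph0 !mul0r !addr0.
Qed.

End BinaryForms.

Section HiggsFields.
Variable R : realType.
Local Notation C := (R[i])%C.
Local Notation P := {mpoly C[2]}.
Implicit Types (Phi : 'M[P]_2) (f : 'I_4 -> 'cV[C]_2).

Lemma sectO_homog (n : nat) (p : P) : sectO n p <-> p \is n.-homog.
Proof. by rewrite /sectO. Qed.

Lemma sectO_neg k (p : P) : k < 0 -> sectO k p -> p = 0.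
Proof. by rewrite /sectO => /lt_geF -> /eqP. Qed.

Lemma sectO0 k : sectO k (0 : P).
Proof. by rewrite /sectO; case: ifP => // _; apply: dhomog0. Qed.

Lemma higgs_entry_homog m1 m2 Phi a b (n : nat) : higgs_section m1 m2 Phi ->
  mdeg2 m1 m2 a - mdeg2 m1 m2 b + 2 = n -> Phi a b \is n.-homog.
Proof. by move=> hPhi e; move: (hPhi a b); rewrite e => /sectO_homog. Qed.

Lemma higgs_diag_homog m1 m2 Phi : higgs_section m1 m2 Phi ->
  forall a, Phi a a \is 2.-homog.
Proof. by move=> hPhi a; apply: higgs_entry_homog hPhi _; rewrite subrr add0r. Qed.

(* Step 1: nilpotent residues at 0, 1, oo force tr Phi = 0. *)
Lemma QPH_trace m1 m2 z1 f Phi : QPH m1 m2 z1 f Phi ->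
  Phi ord_max ord_max = - Phi ord0 ord0.
Proof.
case=> _ [hPhi hres].
set t := Phi ord0 ord0 + Phi ord_max ord_max.
have ht : t \is 2.-homog by apply: dhomogD; apply: higgs_diag_homog hPhi _.
have t_at i : t.@[marked_pt z1 i] = 0.
  by have := nilpotent_mx2_trace (hres i).1; rewrite mxtrace2 !mxE mevalD.
have t_pt u w i : pt2 u w =1 marked_pt z1 i -> t.@[pt2 u w] = 0.
  by move=> e; rewrite (meval_eq _ e) t_at.
have /eqP : t = 0.
  apply: quadratic_form_vanish3 ht (t_pt 0 1 (Ordinal (isT : (1 < 4)%N)) _)
    (t_pt 1 1 (Ordinal (isT : (2 < 4)%N)) _) (t_pt 1 0 (Ordinal (isT : (3 < 4)%N)) _);
  by move=> k; case: (ord2P k) => ->.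
by rewrite /t addrC addr_eq0 => /eqP.
Qed.

Lemma QPH0_relation m1 m2 z1 f Phi : QPH0 m1 m2 z1 f Phi ->
  Phi ord_max ord_max = - Phi ord0 ord0 /\
  Phi ord0 ord0 * Phi ord0 ord0 + Phi ord0 ord_max * Phi ord_max ord0 = 0.
Proof.
case=> hQ hdet; have htr := QPH_trace hQ; split => //.
by move: hdet; rewrite det_mx2 htr => hdet; apply: (eq_mod0 (k := -1) hdet); ring.
Qed.

Lemma root_of_relation (p q r : P) x : p * p + q * r = 0 -> r.@[x] = 0 -> p.@[x] = 0.
Proof.
move=> h rx; move/(congr1 (meval x))/eqP: h.
by rewrite mevalD !mevalM rx mulr0 addr0 meval0 mulf_eq0 orbb => /eqP.
Qed.

Lemma mulmx_col2_eq0 Phi (a b : P) :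
  Phi *m col2 a b = 0 <-> Phi ord0 ord0 * a + Phi ord0 ord_max * b = 0 /\
                          Phi ord_max ord0 * a + Phi ord_max ord_max * b = 0.
Proof.
split.
- move=> h; split.
  + by have := congr1 (fun A : 'cV[P]_2 => A ord0 ord0) h; rewrite mulmx2E !mxE.
  + by have := congr1 (fun A : 'cV[P]_2 => A ord_max ord0) h; rewrite mulmx2E !mxE.
- case=> h0 h1; apply/matrixP => i j; rewrite mulmx2E !mxE /=.
  by case: (ord2P i) => ->.
Qed.

Lemma kernel_of_factor (p q r L a b : P) : p * p + q * r = 0 -> r != 0 ->
  p = L * a -> r = L * b -> p * a + q * b = 0 /\ r * a + (- p) * b = 0.
Proof.
move=> h rn ep er; split; last by rewrite ep er; ring.
apply: (mulfI rn); rewrite mulr0; rewrite ep er in h *.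
by apply: (eq_mod0 (k := b) h); ring.
Qed.

Lemma higgs_kernel m1 m2 z1 f Phi (L a b : P) : QPH0 m1 m2 z1 f Phi ->
  Phi ord_max ord0 != 0 -> Phi ord0 ord0 = L * a -> Phi ord_max ord0 = L * b ->
  Phi *m col2 a b = 0.
Proof.
move=> /QPH0_relation [htr hrel] rn ep er.
by apply/mulmx_col2_eq0; rewrite htr; apply: kernel_of_factor hrel rn ep er.
Qed.

Lemma higgs_kernel_E1 m1 m2 z1 f Phi : QPH0 m1 m2 z1 f Phi ->
  Phi ord_max ord0 = 0 -> Phi *m col2 1 0 = 0.
Proof.
move=> /QPH0_relation [htr hrel] r0.
have p0 : Phi ord0 ord0 = 0.
  by move/eqP: hrel; rewrite r0 mulr0 addr0 mulf_eq0 orbb => /eqP.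
by apply/mulmx_col2_eq0; rewrite htr p0 r0 oppr0 !mul0r !mulr0 !addr0.
Qed.

Lemma kernel_proportional Phi (a b a' b' : P) : Phi != 0 ->
  Phi *m col2 a b = 0 -> Phi *m col2 a' b' = 0 -> a * b' = a' * b.
Proof.
move=> hPhi /mulmx_col2_eq0 [h0 h1] /mulmx_col2_eq0 [h0' h1'].
apply/eqP; rewrite -subr_eq0; apply/negPn/negP => hD.
have row0 (x y : P) : x * a + y * b = 0 -> x * a' + y * b' = 0 -> x = 0 /\ y = 0.
  move=> e e'; split; apply: (mulfI hD); rewrite mulr0.
  - apply: (eq_mod0 (k := 1) (w := b' * (x * a + y * b) - b * (x * a' + y * b'))).
      by rewrite e e' !mulr0 subrr.
    ring.
  - apply: (eq_mod0 (k := 1) (w := a * (x * a' + y * b') - a' * (x * a + y * b))).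
      by rewrite e e' !mulr0 subrr.
    ring.
case/negP: hPhi; apply/eqP/matrixP => i j; rewrite mxE.
have [[x0 y0] [x1 y1]] := (row0 _ _ h0 h0', row0 _ _ h1 h1').
by case: (ord2P i) => ->; case: (ord2P j) => ->.
Qed.

Lemma line_subbundle_nonzero m1 m2 j (a b : P) :
  line_subbundle m1 m2 j a b -> ~ (a = 0 /\ b = 0).
Proof.
case=> _ [_ coprime] [a0 b0]; apply: (coprime (pt2 1 0)).
  by apply: nonzero_pt2; left; rewrite oner_eq0.
by rewrite a0 b0 meval0.
Qed.

Lemma line_subbundle_E1 m1 m2 j : m1 - j = 0 -> line_subbundle m1 m2 j (1 : P) 0.
Proof.
move=> e; split; first by rewrite e; apply/(sectO_homog 0)/dhomog1.
split; first exact: sectO0.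
by move=> v _ []; rewrite meval1 => /eqP; rewrite oner_eq0.
Qed.

Lemma line_subbundle_const m1 m2 j (a : P) (k : C) :
  sectO (m1 - j) a -> m2 - j = 0 -> k != 0 -> line_subbundle m1 m2 j a k%:MP.
Proof.
move=> ha e kn; split=> //; split; first by rewrite e; apply/(sectO_homog 0)/dhomogC.
by move=> v _ []; rewrite mevalC => _ /eqP; rewrite (negbTE kn).
Qed.

Lemma Rlocus_of_E1 m1 m2 z1 f Phi : QPH0 m1 m2 z1 f Phi -> Phi != 0 ->
  Phi ord_max ord0 = 0 -> Rlocus m1 m2 z1 f Phi.
Proof.
move=> hQ hP r0; split=> //; split=> //.
exists m1, 1, 0; split=> //; split; first by apply: line_subbundle_E1; rewrite subrr.
exact: higgs_kernel_E1 hQ r0.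
Qed.

Lemma Slocus_intro m1 m2 z1 j f Phi (a b : P) : QPH0 m1 m2 z1 f Phi -> Phi != 0 ->
  line_subbundle m1 m2 j a b -> Phi *m col2 a b = 0 -> (m2 < m1 -> b != 0) ->
  Slocus m1 m2 z1 j f Phi.
Proof. by move=> hQ hP hL hk hb; split=> //; split=> //; split; [exact: hQ.2 | exists a, b]. Qed.

(* Step 4: R and S_j are disjoint, since L(Phi) is determined by Phi. *)
Lemma R_S_disjoint m1 m2 z1 j f Phi : m2 < m1 ->
  Rlocus m1 m2 z1 f Phi -> Slocus m1 m2 z1 j f Phi -> False.
Proof.
move=> hm [_ [hP [j0 [a [b [[hL hk] b0]]]]]] [_ [_ [_ [a' [b' [[_ hk'] hb']]]]]].
have a0 : a != 0 by apply/eqP => a0; apply: (line_subbundle_nonzero hL).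
move/eqP: (kernel_proportional hP hk hk'); rewrite b0 mulr0.
by rewrite mulf_eq0 (negbTE a0) (negbTE (hb' hm)).
Qed.

(* In the balanced case, a constant vector and a coprime pair of linear forms
   cannot both span L(Phi): the linear forms would have a common zero. *)
Lemma S_balanced_disjoint m z1 f Phi :
  Slocus m m z1 m f Phi -> Slocus m m z1 (m - 1) f Phi -> False.
Proof.
move=> [_ [hP [_ [a [b [[hL hk] _]]]]]] [_ [_ [_ [a' [b' [[hL' hk'] _]]]]]].
have e := kernel_proportional hP hk hk'.
have nz := line_subbundle_nonzero hL.
case: hL => ha [hb _]; case: hL' => ha' [hb' coprime'].
move: ha hb ha' hb'; rewrite subrr (_ : m - (m - 1) = 1); last by ring.
move=> /(sectO_homog 0)/dhomog0E ea /(sectO_homog 0)/dhomog0E eb.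
move=> /(sectO_homog 1) ha' /(sectO_homog 1) hb'.
rewrite ea eb in e nz.
have [a0|a0] := eqVneq (a@_(mon 0 0)) 0.
- have b0 : b@_(mon 0 0) != 0 by apply/eqP => b0; apply: nz; rewrite a0 b0.
  have [y [ny b'y]] := linear_form_root hb'.
  apply: (coprime' y ny); split => //.
  move/(congr1 (meval y))/esym/eqP: e; rewrite !mevalM !mevalC b'y mulr0.
  by rewrite mulf_eq0 (negbTE b0) orbF => /eqP.
- have [y [ny a'y]] := linear_form_root ha'.
  apply: (coprime' y ny); split => //.
  move/(congr1 (meval y))/eqP: e; rewrite !mevalM !mevalC a'y mul0r.
  by rewrite mulf_eq0 (negbTE a0) => /eqP.
Qed.

End HiggsFields.

Section CaseAnalysis.
Variable R : realType.
Local Notation C := (R[i])%C.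
Local Notation P := {mpoly C[2]}.
Implicit Types (Phi : 'M[P]_2) (f : 'I_4 -> 'cV[C]_2).

(* After removing a common zero x of p and r,
   either p/l_x and r/l_x still share a zero y (then Phi kills a constant
   vector, L(Phi) has degree m) or they are coprime (L(Phi) has degree m - 1). *)
Lemma QPH0_balanced m z1 f Phi : QPH0 m m z1 f Phi -> Phi != 0 ->
  Slocus m m z1 m f Phi \/ Slocus m m z1 (m - 1) f Phi.
Proof.
move=> hQ hP; have [_ hrel] := QPH0_relation hQ.
have hig := hQ.1.2.1.
have hp := higgs_diag_homog hig ord0.
have hr : Phi ord_max ord0 \is 2.-homog by apply: higgs_entry_homog hig _; rewrite /mdeg2 /=; lia.
have [r0|rn] := eqVneq (Phi ord_max ord0) 0.
  left; apply: (Slocus_intro (a := 1) (b := 0)) => //; last by rewrite ltxx.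
  - by apply: line_subbundle_E1; rewrite subrr.
  - exact: higgs_kernel_E1 hQ r0.
have [x [nx rx]] := quadratic_form_root hr.
have [p' [hp' ep]] := quadratic_form_factor hp nx (root_of_relation hrel rx).
have [r' [hr' er]] := quadratic_form_factor hr nx rx.
have [[y [ny [p'y r'y]]]|coprime] :=
  EM (exists y, nonzero_pt y /\ p'.@[y] = 0 /\ r'.@[y] = 0).
- left; have [k1 ek1] := linear_form_factor hp' ny p'y.
  have [k2 ek2] := linear_form_factor hr' ny r'y.
  have ep2 : Phi ord0 ord0 = (linform x * linform y) * k1%:MP by rewrite ep ek1; ring.
  have er2 : Phi ord_max ord0 = (linform x * linform y) * k2%:MP by rewrite er ek2; ring.
  have k2n : k2 != 0 by apply/eqP => k0; move: rn; rewrite er2 k0 mulr0 eqxx.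
  apply: (Slocus_intro (a := k1%:MP) (b := k2%:MP)) => //; last by rewrite ltxx.
  - apply: line_subbundle_const => //; last by rewrite subrr.
    by rewrite subrr; apply/(sectO_homog 0)/dhomogC.
  - exact: higgs_kernel hQ rn ep2 er2.
- right; apply: (Slocus_intro (a := p') (b := r')) => //; last by rewrite ltxx.
  - rewrite /line_subbundle (_ : m - (m - 1) = 1); last by ring.
    do 2 (split; first exact/(sectO_homog 1)).
    by move=> v nv [p'v r'v]; apply: coprime; exists v.
  - exact: higgs_kernel hQ rn ep er.
Qed.

(* E = O(m + 1) + O(m): r is linear; if r <> 0, dividing p and r by their
   common linear factor gives L(Phi) = (p/r, 1) of degree m. *)
Lemma QPH0_gap1 m z1 f Phi : QPH0 (m + 1) m z1 f Phi -> Phi != 0 ->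
  Rlocus (m + 1) m z1 f Phi \/ Slocus (m + 1) m z1 m f Phi.
Proof.
move=> hQ hP; have [_ hrel] := QPH0_relation hQ.
have hig := hQ.1.2.1.
have hp := higgs_diag_homog hig ord0.
have hr : Phi ord_max ord0 \is 1.-homog by apply: higgs_entry_homog hig _; rewrite /mdeg2 /=; lia.
have [r0|rn] := eqVneq (Phi ord_max ord0) 0; first by left; apply: Rlocus_of_E1.
right; have [x [nx rx]] := linear_form_root hr.
have [a [ha ep]] := quadratic_form_factor hp nx (root_of_relation hrel rx).
have [k ek] := linear_form_factor hr nx rx.
have er : Phi ord_max ord0 = linform x * k%:MP by rewrite ek mulrC.
have kn : k != 0 by apply/eqP => k0; move: rn; rewrite er k0 mulr0 eqxx.
apply: (Slocus_intro (a := a) (b := k%:MP)) => //.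
- apply: line_subbundle_const => //; last by rewrite subrr.
  by rewrite (_ : m + 1 - m = 1); [exact/(sectO_homog 1) | ring].
- exact: higgs_kernel hQ rn ep er.
- by rewrite mpolyC_eq0.
Qed.

(* E = O(m + 1) + O(m - 1): r is a constant; if r <> 0, L(Phi) = (p, r) has
   degree m - 1. *)
Lemma QPH0_gap2 m z1 f Phi : QPH0 (m + 1) (m - 1) z1 f Phi -> Phi != 0 ->
  Rlocus (m + 1) (m - 1) z1 f Phi \/ Slocus (m + 1) (m - 1) z1 (m - 1) f Phi.
Proof.
move=> hQ hP; have hig := hQ.1.2.1.
have hr : Phi ord_max ord0 \is 0.-homog by apply: higgs_entry_homog hig _; rewrite /mdeg2 /=; lia.
have [r0|rn] := eqVneq (Phi ord_max ord0) 0; first by left; apply: Rlocus_of_E1.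
right; set k := (Phi ord_max ord0)@_(mon 0 0).
have er : Phi ord_max ord0 = k%:MP := dhomog0E hr.
have kn : k != 0 by apply/eqP => k0; move: rn; rewrite er k0 eqxx.
apply: (Slocus_intro (a := Phi ord0 ord0) (b := Phi ord_max ord0)) => //.
- rewrite er; apply: line_subbundle_const => //; last by rewrite subrr.
  rewrite (_ : m + 1 - (m - 1) = 2); last by ring.
  exact/(sectO_homog 2)/(higgs_diag_homog hig).
- by apply: (higgs_kernel (L := 1)) hQ rn _ _; rewrite mul1r.
Qed.

(* m1 - m2 >= 3: r is a section of O(m2 - m1 + 2), a negative degree. *)
Lemma QPH0_gap3 m1 m2 z1 f Phi : 3 <= m1 - m2 -> QPH0 m1 m2 z1 f Phi -> Phi != 0 ->
  Rlocus m1 m2 z1 f Phi.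
Proof.
move=> hm hQ hP; apply: Rlocus_of_E1 => //.
by apply: (sectO_neg _ (hQ.1.2.1 ord_max ord0)); rewrite /mdeg2 /=; lia.
Qed.

Lemma disj_union3_QPH0 m1 m2 z1 (B D : ('I_4 -> 'cV[C]_2) -> 'M[P]_2 -> Prop) :
  (forall f Phi, B f Phi -> QPH0 m1 m2 z1 f Phi /\ Phi != 0) ->
  (forall f Phi, D f Phi -> QPH0 m1 m2 z1 f Phi /\ Phi != 0) ->
  (forall f Phi, QPH0 m1 m2 z1 f Phi -> Phi != 0 -> B f Phi \/ D f Phi) ->
  (forall f Phi, B f Phi -> D f Phi -> False) ->
  disj_union3 (QPH0 m1 m2 z1) (Qlocus m1 m2 z1) B D.
Proof.
move=> hB hD cover disjBD f Phi; split; last split; last split.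
- split; last by case=> [[]|[/hB []|/hD []]].
  by move=> hQ; have [P0|Pn] := eqVneq Phi 0; [left | right; apply: cover].
- by case=> [[_ ->]] /hB [_ /eqP].
- by case=> [[_ ->]] /hD [_ /eqP].
- by case=> /disjBD.
Qed.

Lemma disj_union2_QPH0 m1 m2 z1 (B : ('I_4 -> 'cV[C]_2) -> 'M[P]_2 -> Prop) :
  (forall f Phi, B f Phi -> QPH0 m1 m2 z1 f Phi /\ Phi != 0) ->
  (forall f Phi, QPH0 m1 m2 z1 f Phi -> Phi != 0 -> B f Phi) ->
  disj_union2 (QPH0 m1 m2 z1) (Qlocus m1 m2 z1) B.
Proof.
move=> hB cover f Phi; split; last by case=> [[_ ->]] /hB [_ /eqP].
split; last by case=> [[]|/hB []].
by move=> hQ; have [P0|Pn] := eqVneq Phi 0; [left | right; apply: cover].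
Qed.

End CaseAnalysis.

Theorem corollary4p4 (R : realType) (z1 : R[i]%C) (hz0 : z1 != 0) (hz1 : z1 != 1)
    (m1 m2 : int) (hm : m2 <= m1) :
  (forall m : int,
     (m1 = m /\ m2 = m ->
        disj_union3 (QPH0 m1 m2 z1) (Qlocus m1 m2 z1)
          (Slocus m1 m2 z1 m) (Slocus m1 m2 z1 (m - 1))) /\
     (m1 = m + 1 /\ m2 = m ->
        disj_union3 (QPH0 m1 m2 z1) (Qlocus m1 m2 z1)
          (Rlocus m1 m2 z1) (Slocus m1 m2 z1 m)) /\
     (m1 = m + 1 /\ m2 = m - 1 ->
        disj_union3 (QPH0 m1 m2 z1) (Qlocus m1 m2 z1)
          (Rlocus m1 m2 z1) (Slocus m1 m2 z1 (m - 1)))) /\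
  (3 <= m1 - m2 ->
     disj_union2 (QPH0 m1 m2 z1) (Qlocus m1 m2 z1) (Rlocus m1 m2 z1)).
Proof.
have R_sub m1' m2' f Phi : Rlocus m1' m2' z1 f Phi -> QPH0 m1' m2' z1 f Phi /\ Phi != 0.
  by case=> hQ [hP _].
have S_sub m1' m2' j f Phi : Slocus m1' m2' z1 j f Phi -> QPH0 m1' m2' z1 f Phi /\ Phi != 0.
  by case=> hQ [hP _].
split; last first.
  move=> hgap; apply: disj_union2_QPH0; first exact: R_sub.
  by move=> f Phi; apply: QPH0_gap3.
move=> m; split; last split; case=> -> ->.
- apply: disj_union3_QPH0; [exact: S_sub | exact: S_sub | exact: QPH0_balanced |].
  exact: S_balanced_disjoint.
- apply: disj_union3_QPH0; [exact: R_sub | exact: S_sub | exact: QPH0_gap1 |].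
  by move=> f Phi; apply: R_S_disjoint; lia.
- apply: disj_union3_QPH0; [exact: R_sub | exact: S_sub | exact: QPH0_gap2 |].
  by move=> f Phi; apply: R_S_disjoint; lia.
Qed.
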